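(* A powerful set $S\subseteq 2^E$ is linear if and only if $r_S(X)\le |X|$ for all $X\subseteq E$.
   Context: For a finite set $E$, $S\subseteq 2^E$ is powerful if for every $X\subseteq E$ the number of members of $S$ contained in $X$ is a power of 2. Its rank function is $r_S(X)=\log_2\big(|S|/|\{Y\in S:Y\subseteq E\setminus X\}|\big)$. $S$ is linear if it is a binary linear space, i.e. $\emptyset\in S$ and $S$ is closed under symmetric difference. *)

From mathcomp Require Import all_boot.
Set Implicit Arguments. Unset Strict Implicit. Unset Printing Implicit Defensive.

Definition nbelow (E : finType) (S : {set {set E}}) (X : {set E}) : nat :=
  #|[set Y in S | Y \subset X]|.

Definition powerful (E : finType) (S : {set {set E}}) : Prop :=
  forall X : {set E}, exists k : nat, nbelow S X = 2 ^ k.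

(* For a powerful S both counts are powers of 2 and the quotient is an
   exact power of 2, so the logarithm is an exact natural number; we
   compute it with trunc_log 2 of the natural-number quotient. *)
Definition rankS (E : finType) (S : {set {set E}}) (X : {set E}) : nat :=
  trunc_log 2 (#|S| %/ nbelow S (~: X)).

Definition symdiff (E : finType) (A B : {set E}) : {set E} :=
  (A :\: B) :|: (B :\: A).

Definition linear_family (E : finType) (S : {set {set E}}) : Prop :=
  set0 \in S /\ forall A B, A \in S -> B \in S -> symdiff A B \in S.

From mathcomp Require Import all_boot all_algebra.
From mathcomp Require Import zify lra.
Set Implicit Arguments. Unset Strict Implicit. Unset Printing Implicit Defensive.
Import GRing.Theory Num.Theory.

(* Let [walsh T = \sum_(Y in S) (-1) ^ #|Y :&: T|] be the Walsh-Hadamard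
   transform of the indicator of S.  Summing it over the subsets T of X gives
   2 ^ #|X| times the number of members of S avoiding X, so for powerful S the
   rank condition says exactly that #|S| divides each of these partial sums.
   As -#|S| < walsh T <= #|S|, induction on #|T| shows that this happens iff
   walsh only takes the values 0 and #|S|.  For linear S this is the case,
   walsh T being #|S| or 0 according as T is orthogonal to all of S or not;
   conversely, by Fourier inversion, such a transform forces the indicator of S
   to be invariant under translation by the members of S. *)

Section SymmetricDifference.
Variable E : finType.
Implicit Types A B T X : {set E}.

Lemma in_symdiff A B x : (x \in symdiff A B) = (x \in A) (+) (x \in B).
Proof. by rewrite !inE; case: (x \in A); case: (x \in B). Qed.

Lemma symdiffK A B : symdiff (symdiff A B) B = A.
Proof. by apply/setP => x; rewrite !in_symdiff addbK. Qed.

Lemma symdiff_eq0 A B : (symdiff A B == set0) = (A == B).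
Proof.
apply/eqP/eqP => [/setP AB | ->]; apply/setP => x.
  by move: (AB x); rewrite in_symdiff inE; case: (x \in A); case: (x \in B).
by rewrite in_symdiff addbb inE.
Qed.

Lemma symdiffIl A B T : symdiff A B :&: T = symdiff (A :&: T) (B :&: T).
Proof.
apply/setP => x; rewrite !(inE, in_symdiff).
by case: (x \in A); case: (x \in B); case: (x \in T).
Qed.

Lemma symdiff1_subset X T z :
  z \in X -> (symdiff T [set z] \subset X) = (T \subset X).
Proof.
move=> zX; apply/subsetP/subsetP => TX x; have := TX x.
  by rewrite in_symdiff inE; case: (x =P z) => [-> | _]; rewrite ?addbF ?addbT.
by rewrite in_symdiff inE; case: (x =P z) => [-> | _]; rewrite ?addbF ?addbT.
Qed.

Lemma odd_card_symdiff A B : odd #|symdiff A B| = odd #|A| (+) odd #|B|.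
Proof.
have -> : symdiff A B = (A :|: B) :\: (A :&: B).
  apply/setP => x; rewrite !(inE, in_symdiff).
  by case: (x \in A); case: (x \in B).
have sub_IU : A :&: B \subset A :|: B by rewrite subIset ?subsetUl.
rewrite cardsD (setIidPr sub_IU) -oddD -cardsUI.
by rewrite oddB ?oddD // subset_leq_card.
Qed.

End SymmetricDifference.

Section Characters.
Variable E : finType.
Implicit Types A T X Y Z : {set E}.
Local Open Scope ring_scope.

Definition chi T Y : int := (-1) ^+ #|Y :&: T|.

Lemma chiC T Y : chi T Y = chi Y T.
Proof. by rewrite /chi setIC. Qed.

Lemma chiE T Y : chi T Y = if odd #|Y :&: T| then -1 else 1.
Proof. by rewrite /chi -signr_odd; case: (odd _). Qed.

Lemma chi_symdiff T A B : chi T (symdiff A B) = chi T A * chi T B.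
Proof.
by rewrite /chi symdiffIl -signr_odd odd_card_symdiff signr_addb !signr_odd.
Qed.

Lemma chi_set0 T : chi T set0 = 1.
Proof. by rewrite /chi set0I cards0. Qed.

Lemma chi_le1 T Y : chi T Y <= 1.
Proof. by rewrite chiE; case: ifP. Qed.

Lemma chi_geN1 T Y : -1 <= chi T Y.
Proof. by rewrite chiE; case: ifP. Qed.

Lemma sum_chi_eq0 (P : {set {set E}}) A T :
  (forall Y, Y \in P -> symdiff Y A \in P) -> chi T A = -1 ->
  \sum_(Y in P) chi T Y = 0.
Proof.
move=> closedP chiA.
suff : \sum_(Y in P) chi T Y = - \sum_(Y in P) chi T Y by lra.
have symdiffA_inj : injective (fun Y => symdiff Y A).
  exact: (can_inj (g := fun Y => symdiff Y A) (fun Y => symdiffK Y A)).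
rewrite {1}(reindex_inj symdiffA_inj) -sumrN.
apply: eq_big => [Y | Y _]; last by rewrite chi_symdiff chiA mulrN1.
by apply/idP/idP => /closedP; rewrite ?symdiffK.
Qed.

Lemma sum_chi_powerset X Z :
  \sum_(T in powerset X) chi T Z =
  if [disjoint Z & X] then (2 ^ #|X|)%:R else 0.
Proof.
case: ifP => [ZX | /negbT].
  rewrite (eq_bigr (fun _ => 1)) ?sumr_const ?card_powerset // => T.
  rewrite powersetE => TX; rewrite /chi (disjoint_setI0 (disjointWr TX ZX)).
  by rewrite cards0.
rewrite -setI_eq0 => /set0Pn [z /setIP [zZ zX]].
under eq_bigr => T _ do rewrite chiC.
apply: (sum_chi_eq0 (A := [set z])) => [T | ].
  by rewrite !powersetE symdiff1_subset.
by rewrite /chi (setIidPl _) ?sub1set // cards1.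
Qed.

Lemma sum_chi Y : \sum_T chi T Y = if Y == set0 then (2 ^ #|E|)%:R else 0.
Proof.
rewrite (eq_bigl [in powerset setT]) => [|T]; last by rewrite powersetT inE.
by rewrite sum_chi_powerset cardsT -setI_eq0 setIT.
Qed.

End Characters.

Section WalshTransform.
Variables (E : finType) (S : {set {set E}}).
Implicit Types T X Y Z : {set E}.
Local Open Scope ring_scope.

Lemma dvdz_bounded_eq (n x : int) :
  0 < n -> - n < x -> x <= n -> (n %| x)%Z -> x = 0 \/ x = n.
Proof.
move=> n_gt0 x_gt x_le /dvdzP [q x_eq]; rewrite {}x_eq in x_gt x_le *.
have : q = 0 \/ q = 1 by nia.
by case=> ->; [left; rewrite mul0r | right; rewrite mul1r].
Qed.

Definition walsh T : int := \sum_(Y in S) chi T Y.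

Lemma sum_walsh_powerset X :
  \sum_(T in powerset X) walsh T = (2 ^ #|X| * nbelow S (~: X))%:R.
Proof.
rewrite exchange_big /=; under eq_bigr => Y _ do rewrite sum_chi_powerset.
rewrite -big_mkcondr /= (eq_bigl [in [set Y in S | Y \subset ~: X]]).
  by rewrite sumr_const natrM mulr_natr.
by move=> Y; rewrite inE disjoints_subset.
Qed.

Lemma walsh_inversion Z : \sum_T walsh T * chi T Z = (2 ^ #|E| * (Z \in S))%:R.
Proof.
rewrite (eq_bigr (fun T => \sum_(Y in S) chi T (symdiff Y Z))); last first.
  by move=> T _; rewrite mulr_suml; apply: eq_bigr => Y _; rewrite chi_symdiff.
rewrite exchange_big /=; under eq_bigr => Y _ do rewrite sum_chi symdiff_eq0.
rewrite -big_mkcondr /=; case: (boolP (Z \in S)) => [ZS | ZnS].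
  rewrite (big_pred1 Z) ?muln1 // => Y.
  by rewrite /= andbC; case: eqP => // ->.
rewrite big_pred0 ?muln0 // => Y.
by case: eqP => [-> | _]; rewrite ?(negbTE ZnS) ?andbF.
Qed.

Lemma walsh_le_card T : walsh T <= #|S|%:R.
Proof.
by rewrite -sum1_card natr_sum; apply: ler_sum => Y _; apply: chi_le1.
Qed.

Lemma walsh_gt_Ncard T : set0 \in S -> - #|S|%:R < walsh T.
Proof.
move=> S0; rewrite -subr_gt0 opprK -sum1_card natr_sum -big_split /=.
rewrite (bigD1 set0) //= chi_set0 ltr_pwDl // sumr_ge0 // => Y _.
by rewrite -lerBlDr sub0r chi_geN1.
Qed.

Lemma walsh_eq_card T : walsh T = #|S|%:R -> {in S, forall Y, chi T Y = 1}.
Proof.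
move=> walshT Y YS; apply/eqP; rewrite eq_sym -subr_eq0; apply/eqP.
apply: (@psumr_eq0P _ _ (mem S) (fun Y => 1 - chi T Y)) YS => [Z _|].
  by rewrite subr_ge0 chi_le1.
by rewrite sumrB sumr_const -/(walsh T) walshT subrr.
Qed.

Lemma walsh_dichotomyP : set0 \in S ->
  (forall X, (#|S| %| 2 ^ #|X| * nbelow S (~: X))%N) <->
  (forall T, walsh T = 0 \/ walsh T = #|S|%:R).
Proof.
move=> S0.
have dvd_sum X : (#|S| %| 2 ^ #|X| * nbelow S (~: X))%N =
                 (#|S|%:Z %| \sum_(T in powerset X) walsh T)%Z.
  by rewrite sum_walsh_powerset natz.
have dvd_walsh01 T : walsh T = 0 \/ walsh T = #|S|%:R -> (#|S|%:Z %| walsh T)%Z.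
  by case=> ->; rewrite ?dvdz0 // natz dvdzz.
split=> [dvdS T | walsh01 X]; last first.
  by rewrite dvd_sum; apply: rpred_sum => T _; apply: dvd_walsh01.
have [m] := ubnP #|T|; elim: m T => // m IH T /ltnSE T_le.
apply: dvdz_bounded_eq; [ | exact: walsh_gt_Ncard | exact: walsh_le_card | ].
  by rewrite ltr0n card_gt0; apply/set0Pn; exists set0.
have := dvdS T; rewrite dvd_sum (bigD1 T) ?powersetE //= rpredDr ?natz //.
apply: rpred_sum => U /andP [UT UnT]; apply: dvd_walsh01; apply: IH.
have /proper_card : U \proper T by rewrite properEneq UnT -powersetE.
by move/leq_trans; apply.
Qed.

Lemma linear_familyP : set0 \in S ->
  linear_family S <-> (forall T, walsh T = 0 \/ walsh T = #|S|%:R).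
Proof.
move=> S0; split=> [[_ S_closed] T | walsh01].
  have [chi1 | /forall_inPn [A AS chiA]] := boolP [forall Y in S, chi T Y == 1].
    right; rewrite /walsh (eq_bigr (fun=> 1)) ?sumr_const // => Y YS.
    exact/eqP/(forall_inP chi1).
  left; apply: (sum_chi_eq0 (A := A)) => [Y YS|]; first exact: S_closed.
  by move: chiA; rewrite chiE; case: ifP.
split=> // A B AS BS.
have : \sum_T walsh T * chi T (symdiff A B) = \sum_T walsh T * chi T set0.
  apply: eq_bigr => T _; case: (walsh01 T) => walshT; rewrite walshT ?mul0r //.
  by rewrite chi_symdiff !(walsh_eq_card walshT) // chi_set0.
move/eqP; rewrite !walsh_inversion S0 eqr_nat; case: (_ \in S) => //.
by rewrite muln0 muln1 eq_sym expn_eq0.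
Qed.

End WalshTransform.

Section PowerfulFamilies.
Variables (E : finType) (S : {set {set E}}).
Hypothesis S_powerful : powerful S.

Lemma powerful_set0 : set0 \in S.
Proof.
have [k nbelow0] := S_powerful set0.
have : (0 < nbelow S set0)%N by rewrite nbelow0 expn_gt0.
rewrite card_gt0 => /set0Pn [Y]; rewrite inE subset0 => /andP [YS /eqP <-] //.
Qed.

Lemma powerful_rankS_le X k :
  (rankS S X <= k) = (#|S| %| 2 ^ k * nbelow S (~: X)).
Proof.
have [a nbelowT] := S_powerful setT; have [b nbelowX] := S_powerful (~: X).
have cardS : #|S| = 2 ^ a.
  by rewrite -nbelowT; apply: eq_card => Y; rewrite inE subsetT andbT.
have le_ba : b <= a.
  rewrite -(@leq_exp2l 2) // -nbelowX -cardS subset_leq_card //.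
  by apply/subsetP => Y; rewrite inE => /andP [].
rewrite /rankS cardS nbelowX -expnB // trunc_expnK // -expnD dvdn_Pexp2l //.
lia.
Qed.

End PowerfulFamilies.

Theorem corollary3 (E : finType) (S : {set {set E}}) :
  powerful S ->
  (linear_family S <-> forall X : {set E}, rankS S X <= #|X|).
Proof.
move=> S_powerful; have S0 := powerful_set0 S_powerful.
rewrite (linear_familyP S0) -(walsh_dichotomyP S0).
by split=> rank_le X; move: (rank_le X); rewrite powerful_rankS_le.
Qed.
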